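(* Let $0\le r\le n$. The operators $K_{rj}$, $j=0,1,\dots,r$, form a basis of the vector space $\mathcal L_{r,r}$; in particular $\dim\mathcal L_{r,r}=r+1$.
   Context: $D=d/dx$. For $s\ge0$, $\mathcal P_s$ is the space of real polynomials in $x$ of degree at most $s$, and $\mathcal P_s=\{0\}$ for $s<0$. For $0\le m\le r$, $\mathcal L_{r,m}$ denotes the real vector space of linear differential operators $L=\sum_{i=0}^r a_i(x)D^i$ with $a_i\in\mathbb R[x]$ (order at most $r$) such that $L(\mathcal P_n)\subset\mathcal P_{n-m}$ (deficiency at least $m$ relative to $\mathcal P_n$). Pochhammer operator: $(a-xD)_k=(-1)^k(xD-a)(xD-(a-1))\cdots(xD-(a-k+1))$. $K_{rj}=\frac{1}{(r-j)!}(n-j-xD)_{r-j}D^j$. *)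

From mathcomp Require Import all_boot all_order all_algebra.
Set Implicit Arguments. Unset Strict Implicit. Unset Printing Implicit Defensive.
Import Order.TTheory GRing.Theory Num.Theory.
Local Open Scope ring_scope.

(* Linear differential operators with polynomial coefficients are identified
   with their action on R[x] (faithful in characteristic 0). *)

Section Ops.
Variable R : realFieldType.

Definition diffop_app (a : seq {poly R}) (p : {poly R}) : {poly R} :=
  \sum_(i < size a) a`_i * p^`(i).

(* membership in P_s, with P_s = {0} for s < 0 *)
Definition inP (s : int) (p : {poly R}) : bool :=
  if s is Posz k then (size p <= k.+1)%N else p == 0.

Definition Lspace (n r m : nat) (L : {poly R} -> {poly R}) : Prop :=
  (exists a : seq {poly R}, (size a <= r.+1)%N /\ L =1 diffop_app a) /\
  (forall p : {poly R}, (size p <= n.+1)%N -> inP (n%:Z - m%:Z) (L p)).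

Definition xD (p : {poly R}) : {poly R} := 'X * p^`().

(* Pochhammer operator (a - xD)_k = prod_{l<k} (a - l - xD) *)
Fixpoint poch (a : R) (k : nat) (p : {poly R}) : {poly R} :=
  match k with
  | 0 => p
  | k'.+1 => let q := poch a k' p in (a - k'%:R) *: q - xD q
  end.

Definition Kop (n r j : nat) (p : {poly R}) : {poly R} :=
  ((r - j)`!%:R)^-1 *: poch (n%:R - j%:R) (r - j) (p^`(j)).

End Ops.

(* K_{rj} maps x^k to a multiple of x^(k-j), so on x^j only K_{rj} has a
   nonzero constant term: this gives independence.  For spanning, subtract from
   L the combination of the K_{rj} with the same constant terms on 1, ..., x^r.
   The difference M = sum_i a_i D^i is again in L_{r,r}, and the coefficient of
   x^(k+d) in M x^k is P_d(k) = sum_i (a_i)_(i+d) k(k-1)...(k-i+1), a polynomial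
   of degree at most r in k.  The degree condition on P_n and the vanishing
   constant terms provide r+1 integer roots of every P_d, hence M = 0. *)

From mathcomp Require Import all_boot all_order all_algebra.
From mathcomp Require Import ring zify.
Import Order.TTheory GRing.Theory Num.Theory.
Set Implicit Arguments. Unset Strict Implicit. Unset Printing Implicit Defensive.
Local Open Scope ring_scope.

Section DifferentialOperators.
Variable R : comNzRingType.
Implicit Types (p : {poly R}) (T S : {poly R} -> {poly R}).

Definition diffop (r : nat) T :=
  exists a : nat -> {poly R}, forall p, T p = \sum_(i < r.+1) a i * p^`(i).

Lemma eq_diffop r T S : T =1 S -> diffop r S -> diffop r T.
Proof. by move=> eTS [a Sa]; exists a => p; rewrite eTS Sa. Qed.

Lemma diffop_id : diffop 0 id.
Proof. by exists (fun=> 1) => p; rewrite big_ord1 mul1r. Qed.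

Lemma diffop0 r : diffop r (fun=> 0).
Proof. by exists (fun=> 0) => p; rewrite big1 // => i _; rewrite mul0r. Qed.

Lemma diffopD r T S :
  diffop r T -> diffop r S -> diffop r (fun p => T p + S p).
Proof.
move=> [a Ta] [b Sb]; exists (fun i => a i + b i) => p.
by rewrite Ta Sb -big_split; apply: eq_bigr => i _; rewrite mulrDl.
Qed.

Lemma diffopMl r u T : diffop r T -> diffop r (fun p => u * T p).
Proof.
move=> [a Ta]; exists (fun i => u * a i) => p.
by rewrite Ta mulr_sumr; apply: eq_bigr => i _; rewrite mulrA.
Qed.

Lemma diffopZ r c T : diffop r T -> diffop r (fun p => c *: T p).
Proof. by move/(diffopMl c%:P); apply: eq_diffop => p; rewrite mul_polyC. Qed.

Lemma diffopB r T S :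
  diffop r T -> diffop r S -> diffop r (fun p => T p - S p).
Proof.
move=> dT /(diffopMl (-1)) dS.
by apply: eq_diffop (diffopD dT dS) => p; rewrite mulN1r.
Qed.

Lemma diffop_sum r m (F : 'I_m -> {poly R} -> {poly R}) :
  (forall j, diffop r (F j)) -> diffop r (fun p => \sum_(j < m) F j p).
Proof.
elim: m F => [|m IHm] F dF.
  by apply: eq_diffop (diffop0 r) => p; rewrite big_ord0.
apply: eq_diffop (diffopD (IHm _ (fun j => dF _)) (dF ord_max)) => p.
by rewrite big_ord_recr.
Qed.

Lemma diffop_widen r s T : (r <= s)%N -> diffop r T -> diffop s T.
Proof.
move=> rs [a Ta]; exists (fun i => if (i < r.+1)%N then a i else 0) => p.
rewrite Ta (big_ord_widen s.+1 (fun i => a i * p^`(i))) // big_mkcond.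
by apply: eq_bigr => i _; case: ifP; rewrite ?mul0r.
Qed.

Lemma diffop_comp_deriv r T : diffop r T -> diffop r.+1 (fun p => T p^`()).
Proof.
move=> [a Ta]; exists (fun i => if i is i'.+1 then a i' else 0) => p.
rewrite Ta [RHS]big_ord_recl /= mul0r add0r; apply: eq_bigr => i _.
by rewrite -derivSn.
Qed.

Lemma diffop_comp_derivn r j T :
  diffop r T -> diffop (r + j) (fun p => T p^`(j)).
Proof.
move=> dT; elim: j => [|j IHj].
  by rewrite addn0; apply: eq_diffop dT => p; rewrite derivn0.
by rewrite addnS; apply: eq_diffop (diffop_comp_deriv IHj) => p; rewrite derivSn.
Qed.

Lemma diffop_deriv_comp r T : diffop r T -> diffop r.+1 (fun p => (T p)^`()).
Proof.
move=> dT; have [a Ta] := dT.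
have da' : diffop r (fun p => \sum_(i < r.+1) (a i)^`() * p^`(i)).
  by exists (fun i => (a i)^`()).
apply: eq_diffop (diffopD (diffop_widen (leqnSn r) da') (diffop_comp_deriv dT)).
move=> p; rewrite !Ta raddf_sum -big_split; apply: eq_bigr => i _.
by rewrite /= derivM -derivnS derivSn.
Qed.

Lemma diffop_expand r T p :
  diffop r T -> T p = \sum_(k < size p) p`_k *: T 'X^k.
Proof.
move=> [a Ta]; rewrite Ta -[in LHS](coefK p) poly_def.
under eq_bigr do rewrite raddf_sum mulr_sumr.
rewrite exchange_big; apply: eq_bigr => k _; rewrite Ta scaler_sumr.
by apply: eq_bigr => i _; rewrite /= derivnZ scalerAr.
Qed.

Lemma coef_diffop_Xn r (a : nat -> {poly R}) k t :
  (\sum_(i < r.+1) a i * ('X^k)^`(i))`_t =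
  \sum_(i < r.+1) (if (t < k - i)%N then 0 else (a i)`_(t - (k - i))) * (k ^_ i)%:R.
Proof.
rewrite coef_sum; apply: eq_bigr => i _.
by rewrite derivnXn mulrnAr coefMn coefMXn mulr_natr.
Qed.

Definition ffpoly (i : nat) : {poly R} := \prod_(l < i) ('X - l%:R%:P).

Lemma ffpolyS i : ffpoly i.+1 = ffpoly i * ('X - i%:R%:P).
Proof. by rewrite /ffpoly big_ord_recr. Qed.

Lemma size_ffpoly i : (size (ffpoly i) <= i.+1)%N.
Proof.
elim: i => [|i IHi]; first by rewrite /ffpoly big_ord0 size_poly1.
by rewrite ffpolyS (leq_trans (size_polyMleq _ _)) // size_XsubC addn2.
Qed.

Lemma ffpoly_nat i k : (ffpoly i).[k%:R] = (k ^_ i)%:R.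
Proof.
elim: i => [|i IHi]; first by rewrite /ffpoly big_ord0 hornerC ffactn0.
rewrite ffpolyS hornerM IHi hornerXsubC ffactnSr natrM.
have [ik|ki] := leqP i k; first by rewrite natrB.
by rewrite ffact_small // !mul0r.
Qed.

End DifferentialOperators.

Lemma poly_nat_roots_eq0 (R : numDomainType) (P : {poly R}) (s : seq nat) :
  uniq s -> (size P <= size s)%N -> {in s, forall k, P.[k%:R] = 0} -> P = 0.
Proof.
move=> us sP P0; apply/eqP; apply: contraLR sP => nzP; rewrite -ltnNge.
rewrite -(size_map (fun k => k%:R : R)); apply: max_poly_roots nzP _ _.
  by apply/allP => _ /mapP[k ks ->]; apply/eqP/P0.
by rewrite map_inj_uniq // => x y /eqP; rewrite eqr_nat => /eqP.
Qed.

Section Uniqueness.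
Variables (R : numDomainType) (n r : nat).
Variables (a : nat -> {poly R}) (T : {poly R} -> {poly R}).
Hypothesis le_rn : (r <= n)%N.
Hypothesis T_def : forall p, T p = \sum_(i < r.+1) a i * p^`(i).
Hypothesis T_deg : forall k t, (k <= n)%N -> (n - r < t)%N -> (T 'X^k)`_t = 0.
Hypothesis T_coef0 : forall j, (j <= r)%N -> (T 'X^j)`_0 = 0.

Definition symbol (c : nat -> R) : {poly R} := \sum_(i < r.+1) c i *: ffpoly R i.

(* Evaluated at k, these are the coefficients of x^(k+d), resp. x^(k-j), in T x^k. *)
Definition symbol_up d := symbol (fun i => (a i)`_(i + d)).
Definition symbol_down j := symbol (fun i => if (j <= i)%N then (a i)`_(i - j) else 0).

Lemma size_symbol c : (size (symbol c) <= r.+1)%N.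
Proof.
rewrite (leq_trans (size_sum _ _ _)) //; apply/bigmax_leqP => i _.
exact: leq_trans (size_scale_leq _ _) (leq_trans (size_ffpoly _ _) (ltn_ord i)).
Qed.

Lemma horner_symbol c k : (symbol c).[k%:R] = \sum_(i < r.+1) c i * (k ^_ i)%:R.
Proof. by rewrite horner_sum; apply: eq_bigr => i _; rewrite hornerZ ffpoly_nat. Qed.

Lemma horner_symbol_up d k : (symbol_up d).[k%:R] = (T 'X^k)`_(k + d).
Proof.
rewrite horner_symbol T_def coef_diffop_Xn; apply: eq_bigr => i _.
have [ik|ki] := leqP i k; last by rewrite ffact_small // !mulr0.
by rewrite ifF; [congr (_`__ * _); lia | lia].
Qed.

Lemma horner_symbol_down j k :
  (j <= k)%N -> (symbol_down j).[k%:R] = (T 'X^k)`_(k - j).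
Proof.
move=> jk; rewrite horner_symbol T_def coef_diffop_Xn; apply: eq_bigr => i _.
have [ik|ki] := leqP i k; last by rewrite ffact_small // !mulr0.
have [ji|ij] := leqP j i; last by rewrite ifT //; lia.
by rewrite ifF; [congr (_`__ * _); lia | lia].
Qed.

Lemma symbol_up_eq0 d : (0 < d)%N -> symbol_up d = 0.
Proof.
move=> d_gt0; apply: (poly_nat_roots_eq0 (iota_uniq (n - r) r.+1)).
  by rewrite size_iota size_symbol.
by move=> k; rewrite mem_iota => kn; rewrite horner_symbol_up T_deg //; lia.
Qed.

(* The roots are k < j (where k^_i = 0 for all i >= j), k = j, and the r - j
   values k in (n - r + j, n]. *)
Lemma symbol_down_eq0 j : symbol_down j = 0.
Proof.
have [rj|jr] := ltnP r j.
  rewrite /symbol_down /symbol big1 // => i _.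
  by rewrite ifF ?scale0r //; move: (ltn_ord i); lia.
pose s := iota 0 j.+1 ++ iota (n - r + j).+1 (r - j).
have us : uniq s.
  rewrite cat_uniq !iota_uniq andbT andTb; apply/hasPn => k.
  by rewrite !mem_iota; lia.
apply: (poly_nat_roots_eq0 us).
  by rewrite size_cat !size_iota (leq_trans (size_symbol _)) //; lia.
move=> k; rewrite mem_cat !mem_iota => /orP[kj|kn]; last first.
  by rewrite horner_symbol_down ?T_deg //; lia.
have [ltkj|lejk] := ltnP k j; last first.
  have -> : k = j by lia.
  by rewrite horner_symbol_down // subnn T_coef0.
rewrite horner_symbol big1 // => i _; case: ifP => ji; last by rewrite mul0r.
by rewrite ffact_small ?mulr0 //; lia.
Qed.

Lemma diffop_Xn_eq0 k : T 'X^k = 0.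
Proof.
apply/polyP => t; rewrite coef0.
have [ltkt|letk] := ltnP k t.
  have := horner_symbol_up (t - k) k.
  by rewrite symbol_up_eq0 ?subn_gt0 // horner0 subnKC // ltnW.
have := horner_symbol_down (leq_subr t k).
by rewrite symbol_down_eq0 horner0 subKn.
Qed.

End Uniqueness.

Lemma diffop_eq0 (R : numDomainType) (n r : nat) (T : {poly R} -> {poly R}) :
  (r <= n)%N -> diffop r T ->
  (forall k t, (k <= n)%N -> (n - r < t)%N -> (T 'X^k)`_t = 0) ->
  (forall j, (j <= r)%N -> (T 'X^j)`_0 = 0) ->
  forall p, T p = 0.
Proof.
move=> le_rn dT T_deg T_coef0 p; have [a T_def] := dT.
rewrite (diffop_expand p dT) big1 // => k _.
by rewrite (diffop_Xn_eq0 le_rn T_def T_deg T_coef0) scaler0.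
Qed.

Section KrjBasis.
Variable R : realFieldType.
Implicit Types (p q : {poly R}) (T : {poly R} -> {poly R}).

Lemma coef_xD p m : (xD p)`_m = p`_m * m%:R.
Proof.
rewrite /xD coefXM; case: m => [|m] /=; first by rewrite mulr0.
by rewrite coef_deriv mulr_natr.
Qed.

Lemma coef_poch (b : R) k p m : (poch b k p)`_m = (ffpoly R k).[b - m%:R] * p`_m.
Proof.
elim: k => [|k IHk]; first by rewrite /ffpoly big_ord0 hornerC mul1r.
by rewrite /= coefB coefZ coef_xD IHk ffpolyS hornerM hornerXsubC; ring.
Qed.

Lemma coef_Kop n r j p t : (Kop n r j p)`_t =
  (r - j)`!%:R^-1 * (ffpoly R (r - j)).[n%:R - j%:R - t%:R] * (p`_(j + t) *+ (j + t) ^_ j).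
Proof. by rewrite /Kop coefZ coef_poch coef_derivn mulrA. Qed.

Lemma coef_Kop_gt n r j p t : (j <= r)%N -> (r <= n)%N ->
  (size p <= n.+1)%N -> (n - r < t)%N -> (Kop n r j p)`_t = 0.
Proof.
move=> le_jr le_rn sp rt; rewrite coef_Kop.
have [jtn|njt] := leqP (j + t) n; last by rewrite (leq_sizeP _ _ sp) // mul0rn mulr0.
have -> : n%:R - j%:R - t%:R = (n - j - t)%:R :> R by rewrite natrB ?natrB //; lia.
by rewrite ffpoly_nat ffact_small ?mulr0 ?mul0r //; lia.
Qed.

Lemma coef0_Kop_Xn n r j i : i != j -> (Kop n r j ('X^i : {poly R}))`_0 = 0.
Proof. by move=> ij; rewrite coef_Kop addn0 coefXn eq_sym (negPf ij) mul0rn mulr0. Qed.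

Lemma coef0_Kop_Xn_neq0 n r j : (j <= r)%N -> (r <= n)%N ->
  (Kop n r j ('X^j : {poly R}))`_0 != 0.
Proof.
move=> le_jr le_rn; rewrite coef_Kop addn0 coefXn eqxx subr0 -natrB; last lia.
rewrite ffpoly_nat ffactnn !mulf_neq0 ?invr_eq0 ?pnatr_eq0 -?lt0n ?fact_gt0 //.
by rewrite ffact_gt0; lia.
Qed.

Lemma coef0_sum_Kop_Xn n r (c : 'I_r.+1 -> R) (j : 'I_r.+1) :
  (\sum_(i < r.+1) c i *: Kop n r i 'X^j)`_0 = c j * (Kop n r j 'X^j)`_0.
Proof.
rewrite coef_sum (bigD1 j) //= coefZ big1 ?addr0 // => i ij.
by rewrite coefZ coef0_Kop_Xn ?mulr0 // eq_sym.
Qed.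

Lemma diffop_poch (b : R) k : diffop k (poch b k).
Proof.
elim: k => [|k IHk]; first by apply: eq_diffop (diffop_id R).
have dZ := diffop_widen (leqnSn k) (diffopZ (b - k%:R) IHk).
by apply: eq_diffop (diffopB dZ (diffopMl 'X (diffop_deriv_comp IHk))).
Qed.

Lemma diffop_Kop n r j : (j <= r)%N -> diffop r (@Kop R n r j).
Proof.
move=> le_jr; have := diffopZ ((r - j)`!%:R^-1)
  (diffop_comp_derivn j (diffop_poch (n%:R - j%:R) (r - j))).
by rewrite subnK //; apply: eq_diffop.
Qed.

Lemma diffopP r T :
  (exists a : seq {poly R}, (size a <= r.+1)%N /\ T =1 diffop_app a) <-> diffop r T.
Proof.
split=> [[a [sa Ta]]|[a Ta]].
  exists (fun i => a`_i) => p; rewrite Ta /diffop_app.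
  rewrite (big_ord_widen r.+1 (fun i => a`_i * p^`(i))) // big_mkcond.
  by apply: eq_bigr => i _; case: ltnP => // ai; rewrite nth_default ?mul0r.
exists (mkseq a r.+1); rewrite size_mkseq; split=> // p.
rewrite Ta /diffop_app size_mkseq; apply: eq_bigr => i _.
by rewrite nth_mkseq.
Qed.

Lemma inP_subn n r q : (r <= n)%N -> inP (n%:Z - r%:Z) q = (size q <= (n - r).+1)%N.
Proof. by move=> le_rn; rewrite subzn. Qed.

Lemma Kop_Lspace n r j : (j <= r)%N -> (r <= n)%N -> Lspace n r r (@Kop R n r j).
Proof.
move=> le_jr le_rn; split; first exact/diffopP/diffop_Kop.
by move=> p sp; rewrite inP_subn //; apply/leq_sizeP => t; apply: coef_Kop_gt.
Qed.

Lemma Kop_free n r (c : 'I_r.+1 -> R) : (r <= n)%N ->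
  (forall p, \sum_(j < r.+1) c j *: Kop n r j p = 0) -> forall j, c j = 0.
Proof.
move=> le_rn Kc0 j; have le_jr : (j <= r)%N := ltn_ord j.
apply: (mulIf (coef0_Kop_Xn_neq0 le_jr le_rn)).
by rewrite mul0r -coef0_sum_Kop_Xn Kc0 coef0.
Qed.

Lemma Kop_span n r L : (r <= n)%N -> Lspace n r r L ->
  exists c : 'I_r.+1 -> R, forall p, L p = \sum_(j < r.+1) c j *: Kop n r j p.
Proof.
move=> le_rn [/diffopP dL L_deg].
pose c (j : 'I_r.+1) := (L 'X^j)`_0 / (Kop n r j 'X^j)`_0.
exists c => p; apply/eqP; rewrite -subr_eq0; apply/eqP; move: p.
apply: (diffop_eq0 le_rn).
- apply: diffopB dL (diffop_sum _) => j.
  exact/diffopZ/diffop_Kop/(ltn_ord j).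
- move=> k t kn rt; rewrite coefB coef_sum big1 => [|j _].
    move: (L_deg 'X^k); rewrite size_polyXn inP_subn // => /(_ kn)/leq_sizeP.
    by move->; rewrite ?subr0.
  by rewrite coefZ coef_Kop_gt ?mulr0 ?size_polyXn // -ltnS.
- move=> j le_jr; have := coef0_sum_Kop_Xn n c (Ordinal (le_jr : (j < r.+1)%N)).
  by rewrite coefB /= => ->; rewrite /c divfK ?subrr // coef0_Kop_Xn_neq0.
Qed.

End KrjBasis.

Theorem mainTheorem17 (R : realFieldType) (n r : nat) : (r <= n)%N ->
  (forall j : 'I_r.+1, Lspace n r r (@Kop R n r j)) /\
  (forall c : 'I_r.+1 -> R,
      (forall p : {poly R}, \sum_(j < r.+1) c j *: Kop n r j p = 0) ->
      forall j, c j = 0) /\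
  (forall L : {poly R} -> {poly R}, Lspace n r r L ->
      exists c : 'I_r.+1 -> R,
        forall p : {poly R}, L p = \sum_(j < r.+1) c j *: Kop n r j p).
Proof.
move=> le_rn; split=> [j|]; first by apply: Kop_Lspace; rewrite // -ltnS.
by split=> [c|L]; [exact: Kop_free | exact: Kop_span].
Qed.
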